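(* Let $(x,P)$ be a mechanism satisfying the incentive compatibility constraints, and let $v(\theta)=CPT(\theta,x(\theta),P_\theta)$. Define \[P^*_\theta(y)=\begin{cases}0 & \text{if } y\ge\frac{\mu^*}{\lambda p^*}\big(\theta w_+(x(\theta))-v(\theta)\big),\\ p^* & \text{if } y<\frac{\mu^*}{\lambda p^*}\big(\theta w_+(x(\theta))-v(\theta)\big).\end{cases}\] Then the mechanism $(x,P^* )$ is incentive compatible and yields expected profit at least as high as $(x,P)$.
   Context: $\lambda>0$; $w_+,w_-:[0,1]\to[0,1]$ strictly increasing, thrice differentiable, $w_\pm(0)=0$, $w_\pm(1)=1$, $w_\pm'(0),w_\pm'(1)>1$, $w_\pm'''>0$. $\mu^*=\max_{p\in(0,1]}p/w_-(p)$ and $p^*\in(0,1)$ is the unique point with $\mu^*w_-(p^* )=p^*$. The buyer's value $\theta\in[\underline\theta,\overline\theta]$ is private, with prior $F$ having positive density $f$. A (direct) mechanism $(x,P)$ specifies for each reported type $\theta$ a delivery probability $x(\theta)\in[0,1]$ and the tail $P_\theta(y)=P(T(\theta)>y)$ of a nonnegative random price $T(\theta)$. $CPT(\theta,x,P)=\theta w_+(x)-\lambda\int_0^\infty w_-(P(y))dy$. Incentive compatibility: $CPT(\theta,x(\theta),P_\theta)\ge CPT(\theta,x(\hat\theta),P_{\hat\theta})$ for all $\theta,\hat\theta$. Expected profit: $\int_{\underline\theta}^{\overline\theta}\int_0^\infty P_\theta(y)dy\,f(\theta)d\theta$. *)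

From HB Require Import structures.
From mathcomp Require Import all_boot all_order all_algebra.
From mathcomp Require Import all_classical all_reals all_analysis.
Set Implicit Arguments. Unset Strict Implicit. Unset Printing Implicit Defensive.
Import Order.TTheory GRing.Theory Num.Theory numFieldNormedType.Exports.
Local Open Scope classical_set_scope.
Local Open Scope ring_scope.

Section Defs.
Variable R : realType.

Definition weighting (w : R -> R) : Prop :=
  [/\ (forall a b, 0 <= a -> a < b -> b <= 1 -> w a < w b),
      w 0 = 0 /\ w 1 = 1,
      (forall t, 0 < t < 1 ->
         [/\ derivable w t 1, derivable (derive1 w) t 1,
             derivable (derive1 (derive1 w)) t 1
           & 0 < derive1 (derive1 (derive1 w)) t]),
      (exists d0 : R, 1 < d0 /\ (w h - w 0) / h @[h --> 0^'+] --> d0)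
    & (exists d1 : R, 1 < d1 /\ (w h - w 1) / (h - 1) @[h --> 1^'-] --> d1)].

Definition is_tail (P : R -> R) : Prop :=
  exists mu : probability R R,
    mu `[0%R, +oo[%classic = 1%E /\ forall y, 0 <= y -> (P y)%:E = mu `]y, +oo[%classic.

Definition CPT (lam : R) (wp wm : R -> R) (theta x : R) (P : R -> R) : \bar R :=
  ((theta * wp x)%:E
   - lam%:E * \int[@lebesgue_measure R]_(y in `[0%R, +oo[%classic) (wm (P y))%:E)%E.

Definition mechanism (tl tu : R) (x : R -> R) (P : R -> R -> R) : Prop :=
  forall th, tl <= th <= tu -> 0 <= x th <= 1 /\ is_tail (P th).

Definition IC (lam : R) (wp wm : R -> R) (tl tu : R) (x : R -> R)
    (P : R -> R -> R) : Prop :=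
  forall th th', tl <= th <= tu -> tl <= th' <= tu ->
    (CPT lam wp wm th (x th') (P th') <= CPT lam wp wm th (x th) (P th))%E.

Definition profit (tl tu : R) (f : R -> R) (P : R -> R -> R) : \bar R :=
  (\int[@lebesgue_measure R]_(th in `[tl, tu]%classic)
     ((\int[@lebesgue_measure R]_(y in `[0%R, +oo[%classic) (P th y)%:E) * (f th)%:E))%E.

Definition vfun (lam : R) (wp wm : R -> R) (x : R -> R) (P : R -> R -> R)
    (th : R) : R := fine (CPT lam wp wm th (x th) (P th)).

Definition Pstar (lam mus ps : R) (wp wm : R -> R) (x : R -> R)
    (P : R -> R -> R) (th y : R) : R :=
  if y < mus / (lam * ps) * (th * wp (x th) - vfun lam wp wm x P th)
  then ps else 0.

End Defs.

From mathcomp Require Import all_boot all_order all_algebra.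
From mathcomp Require Import all_classical all_reals all_analysis.
From mathcomp Require Import measurable_realfun.
From mathcomp Require Import ring.
Import Order.TTheory GRing.Theory Num.Theory numFieldNormedType.Exports.
Local Open Scope classical_set_scope.
Local Open Scope ring_scope.

Set Implicit Arguments.
Unset Strict Implicit.
Unset Printing Implicit Defensive.

(* Since [p <= mus * wm p] on [0, 1], every tail [P] satisfies
   [int P <= mus * int wm (P)].  The tail [Pstar th] equals [ps] up to
   [c = mus / ps * int wm (P th)], so [int wm (Pstar th) = wm ps * c] equals
   [int wm (P th)] because [mus * wm ps = ps], while
   [int Pstar th = ps * c = mus * int wm (P th)].  Hence every CPT value, and
   with it incentive compatibility, is unchanged, and the expected payment of
   each type can only increase. *)

(* The Lebesgue integral is a supremum over simple minorants, so monotonicity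
   needs no measurability. *)
Lemma ge0_le_integral_nomeas (R : realType) d (T : measurableType d)
    (mu : {measure set T -> \bar R}) (D : set T) (f g : T -> \bar R) :
  (forall x, D x -> (0 <= f x)%E) -> (forall x, D x -> (f x <= g x)%E) ->
  (\int[mu]_(x in D) f x <= \int[mu]_(x in D) g x)%E.
Proof.
move=> f0 fg; have g0 x : D x -> (0 <= g x)%E.
  by move=> Dx; exact: le_trans (f0 _ Dx) (fg _ Dx).
rewrite !(integral_mkcond D) !ge0_integralTE; [|exact: erestrict_ge0..].
apply: ereal_sup_le => _ [h hf <-]; exists h => //= x.
exact: le_trans (hf x) (lee_restrict fg x).
Qed.

Section weighting.
Variables (R : realType) (w : R -> R).
Hypothesis hw : weighting w.

Lemma weighting0 : w 0 = 0.
Proof. by case: hw => _ []. Qed.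

Lemma weighting1 : w 1 = 1.
Proof. by case: hw => _ []. Qed.

Lemma weighting_le a b : 0 <= a -> a <= b -> b <= 1 -> w a <= w b.
Proof.
case: hw => winc _ _ _ _ a0; rewrite le_eqVlt => /predU1P[-> //|ab] b1.
exact/ltW/winc.
Qed.

Lemma weighting_gt0 a : 0 < a <= 1 -> 0 < w a.
Proof. by case/andP => a0 a1; case: hw => winc [w0 _] _ _ _; rewrite -w0 winc. Qed.

Lemma weighting_ge0 a : 0 <= a <= 1 -> 0 <= w a.
Proof. by case/andP => a0 a1; rewrite -weighting0 weighting_le. Qed.

Lemma weighting_ratio_ub_ge1 mu : (forall p, 0 < p <= 1 -> p / w p <= mu) -> 1 <= mu.
Proof. by move/(_ 1); rewrite lexx ltr01 weighting1 divr1; apply. Qed.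

End weighting.

Section tail.
Variables (R : realType) (P : R -> R).
Hypothesis hP : is_tail P.

Lemma tail_bounds y : 0 <= y -> 0 <= P y <= 1.
Proof.
case: hP => mu [_ Pmu] y0; rewrite -!lee_fin Pmu // measure_ge0.
exact: probability_le1.
Qed.

Lemma integral_tail_ge0 :
  (0 <= \int[@lebesgue_measure R]_(y in `[0%R, +oo[%classic) (P y)%:E)%E.
Proof.
apply: integral_ge0 => y; rewrite /= in_itv /= andbT => y0.
by rewrite lee_fin; case/andP: (tail_bounds y0).
Qed.

Lemma tail_nonincreasing y z : 0 <= y -> y <= z -> P z <= P y.
Proof.
case: hP => mu [_ Pmu] y0 yz; rewrite -lee_fin !Pmu ?(le_trans y0) //.
apply: le_measure; rewrite ?inE // => t /=; rewrite !in_itv /= !andbT.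
exact: le_lt_trans.
Qed.

End tail.

Definition step_tail (R : realType) (p c y : R) : R := if y < c then p else 0.

Section step_tail.
Variables (R : realType) (p c : R).
Hypothesis c0 : 0 <= c.

Lemma integral_step_tail : 0 <= p ->
  (\int[@lebesgue_measure R]_(y in `[0%R, +oo[%classic) (step_tail p c y)%:E
   = (p * c)%:E)%E.
Proof.
move=> p0; transitivity (\int[@lebesgue_measure R]_(y in `[0%R, +oo[%classic)
    (p%:E * (\1_(`[0%R, c[%classic : set R) y)%:E))%E.
  apply: eq_integral => y; rewrite inE /= in_itv /= andbT => y0.
  rewrite indicE /step_tail (_ : y \in _ = (y < c)); last first.
    by apply/idP/idP; rewrite in_setE /= in_itv /= y0.
  by case: ifP; rewrite ?mule1 ?mule0.
rewrite ge0_integralZl_EFin //; last first.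
  by apply/measurable_EFinP; apply: measurable_funTS; exact: measurable_indic.
rewrite integral_indic // setIidl => [|y /=]; last by rewrite !in_itv /= => /andP[->].
have := @lebesgue_measure_itv R `[0, c[ => /= ->; rewrite lte_fin.
by case: ltgtP c0 => // [_ _|<- _]; rewrite ?oppr0 ?adde0 ?mule0 -?EFinM ?mulr0.
Qed.

Lemma step_tail_is_tail : 0 <= p <= 1 -> is_tail (step_tail p c).
Proof.
case/andP => p0 p1; have q0 : 0 <= 1 - p by rewrite subr_ge0.
pose law : {measure set R -> \bar R} :=
  measure_add (mscale (NngNum p0) \d_c) (mscale (NngNum q0) (@dirac _ R 0 R)).
have lawE A : law A = (p * (c \in A)%:R + (1 - p) * (0 \in A)%:R)%:E.
  exact: measure_addE.
have lawT : law setT = 1%E by rewrite lawE !mem_set //= !mulr1 subrKC.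
(* [law] already has mass 1; [mnormalize] only packages it as a probability. *)
pose mu : probability R R := mnormalize law (@dirac _ R 0 R).
have muE A : mu A = law A.
  transitivity (mnormalize law (@dirac _ R 0 R) A); first by [].
  by rewrite /mnormalize lawT onee_eq0 /= invr1 mule1.
exists mu; split => [|y y0]; rewrite muE lawE.
  by rewrite !mem_set /= ?in_itv /= ?lexx ?c0 // !mulr1 subrKC.
have -> : (0 \in `]y, +oo[%classic) = false.
  by apply/negbTE/negP; rewrite in_setE /= in_itv /= andbT ltNge y0.
have -> : (c \in `]y, +oo[%classic) = (y < c).
  by apply/idP/idP; rewrite in_setE /= in_itv /= andbT.
by rewrite /step_tail mulr0 addr0; case: ifP; rewrite ?mulr1 ?mulr0.
Qed.

End step_tail.

Definition distortion (R : realType) (w P : R -> R) : \bar R :=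
  \int[@lebesgue_measure R]_(y in `[0%R, +oo[%classic) (w (P y))%:E.

Lemma distortion_step_tail (R : realType) (w : R -> R) (p c : R) :
  w 0 = 0 -> 0 <= w p -> 0 <= c -> distortion w (step_tail p c) = (w p * c)%:E.
Proof.
move=> w0 wp0 c0; rewrite -integral_step_tail //.
by apply: eq_integral => y _; rewrite /step_tail; case: ifP; rewrite ?w0.
Qed.

Section distortion.
Variables (R : realType) (w P : R -> R).
Hypotheses (hw : weighting w) (hP : is_tail P).

Lemma distorted_tail_ge0 y : 0 <= y -> 0 <= w (P y).
Proof. by move=> y0; rewrite weighting_ge0 // tail_bounds. Qed.

Lemma distortion_ge0 : (0 <= distortion w P)%E.
Proof.
apply: integral_ge0 => y; rewrite /= in_itv /= andbT => y0.
by rewrite lee_fin distorted_tail_ge0.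
Qed.

(* [w \o P] is only nonincreasing on [0, +oo[, so it is measured through
   [y |-> w (P (max 0 y))], which is nonincreasing everywhere. *)
Lemma measurable_distorted_tail :
  measurable_fun (`[0%R, +oo[%classic : set R) (fun y => w (P y)).
Proof.
have mwP : measurable_fun (`[0%R, +oo[%classic : set R)
    (fun y => w (P (Num.max 0 y))).
  apply: nonincreasing_measurable => // a b ab.
  have a0 : 0 <= Num.max 0 a by rewrite le_max lexx.
  have ab' : Num.max 0 a <= Num.max 0 b by rewrite le_max2.
  apply: weighting_le => //; first by case/andP: (tail_bounds hP (le_trans a0 ab')).
    exact: tail_nonincreasing.
  by case/andP: (tail_bounds hP a0).
apply: eq_measurable_fun mwP => y; rewrite inE /= in_itv /= andbT => y0.
by rewrite max_r.
Qed.

Lemma integral_tail_le_distortion (mu : R) :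
  (forall p, 0 < p <= 1 -> p / w p <= mu) ->
  (\int[@lebesgue_measure R]_(y in `[0%R, +oo[%classic) (P y)%:E
   <= mu%:E * distortion w P)%E.
Proof.
move=> wmu; have mu0 : 0 <= mu := le_trans ler01 (weighting_ratio_ub_ge1 hw wmu).
rewrite -ge0_integralZl_EFin //; first last.
- by apply/measurable_EFinP; exact: measurable_distorted_tail.
- by move=> y; rewrite /= in_itv /= andbT => y0; rewrite lee_fin distorted_tail_ge0.
apply: ge0_le_integral_nomeas => y; rewrite /= in_itv /= andbT => y0.
  by rewrite lee_fin; case/andP: (tail_bounds hP y0).
have /andP[+ Py1] := tail_bounds hP y0.
rewrite lee_fin le_eqVlt => /predU1P[<-|Py_gt0]; first by rewrite weighting0 // mulr0.
have wPy_gt0 : 0 < w (P y) by rewrite weighting_gt0 // Py_gt0.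
by rewrite -ler_pdivrMr // wmu // Py_gt0.
Qed.

End distortion.

Section Pstar.
Variables (R : realType) (lam mus ps : R) (wp wm x : R -> R) (P : R -> R -> R).
Variable th : R.
Hypotheses (lam_gt0 : 0 < lam) (hwm : weighting wm).
Hypotheses (mus_max : forall p, 0 < p <= 1 -> p / wm p <= mus).
Hypotheses (ps01 : 0 < ps < 1) (mus_ps : mus * wm ps = ps).
Hypotheses (hP : is_tail (P th)) (distortion_lty : (distortion wm (P th) < +oo)%E).

Local Notation K := (fine (distortion wm (P th))).
Local Notation Ps := (Pstar lam mus ps wp wm x P th).

Let ps_gt0 : 0 < ps. Proof. by case/andP: ps01. Qed.
Let ps_in01 : 0 <= ps <= 1. Proof. by case/andP: ps01 => /ltW -> /ltW. Qed.

Lemma distortion_fineK : distortion wm (P th) = K%:E.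
Proof. by rewrite fineK // ge0_fin_numE // distortion_ge0. Qed.

Lemma Pstar_threshold_ge0 : 0 <= mus / ps * K.
Proof.
have mus_ge0 : 0 <= mus := le_trans ler01 (weighting_ratio_ub_ge1 hwm mus_max).
apply: mulr_ge0; first exact: divr_ge0 mus_ge0 (ltW ps_gt0).
by rewrite fine_ge0 // distortion_ge0.
Qed.

Lemma PstarE : Ps = step_tail ps (mus / ps * K).
Proof.
apply/funext => y.
rewrite /Pstar /vfun /CPT -/(distortion wm (P th)) distortion_fineK.
rewrite -EFinM -EFinB /=; congr (if y < _ then _ else _).
by field; rewrite gt_eqF // gt_eqF.
Qed.

Lemma distortion_Pstar : distortion wm Ps = distortion wm (P th).
Proof.
rewrite PstarE distortion_step_tail
  ?Pstar_threshold_ge0 ?(weighting0 hwm) ?(weighting_ge0 hwm) //.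
by rewrite distortion_fineK mulrA mulrA (mulrC (wm ps)) mus_ps divff ?gt_eqF ?mul1r.
Qed.

Lemma CPT_Pstar t :
  CPT lam wp wm t (x th) Ps = CPT lam wp wm t (x th) (P th).
Proof. by rewrite /CPT; congr (_ - _ * _)%E; exact: distortion_Pstar. Qed.

Lemma Pstar_is_tail : is_tail Ps.
Proof. by rewrite PstarE; apply: step_tail_is_tail; rewrite ?Pstar_threshold_ge0. Qed.

Lemma integral_Pstar_ge :
  (\int[@lebesgue_measure R]_(y in `[0%R, +oo[%classic) (P th y)%:E
   <= \int[@lebesgue_measure R]_(y in `[0%R, +oo[%classic) (Ps y)%:E)%E.
Proof.
rewrite PstarE integral_step_tail ?Pstar_threshold_ge0 ?(ltW ps_gt0) //.
rewrite mulrCA mulrA divfK ?gt_eqF // EFinM -distortion_fineK.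
exact: integral_tail_le_distortion.
Qed.

End Pstar.

Theorem lemma6 (R : realType) (lam : R) (wp wm : R -> R) (mus ps : R)
  (tl tu : R) (f : R -> R) (x : R -> R) (P : R -> R -> R) :
  0 < lam ->
  weighting wp -> weighting wm ->
  (* mus = max over p in (0,1] of p / w_-(p) *)
  (forall p, 0 < p <= 1 -> p / wm p <= mus) ->
  (exists p, 0 < p <= 1 /\ p / wm p = mus) ->
  (* ps is the unique point of (0,1) with mus w_-(ps) = ps *)
  0 < ps < 1 -> mus * wm ps = ps ->
  (forall q, 0 < q < 1 -> mus * wm q = q -> q = ps) ->
  (* type space and prior with positive density f *)
  tl < tu ->
  measurable_fun `[tl, tu]%classic f ->
  (forall th, tl <= th <= tu -> 0 < f th) ->
  (\int[@lebesgue_measure R]_(th in `[tl, tu]%classic) (f th)%:E = 1)%E ->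
  (* (x, P) is an incentive-compatible mechanism with real CPT values *)
  mechanism tl tu x P ->
  (forall th, tl <= th <= tu ->
     (\int[@lebesgue_measure R]_(y in `[0%R, +oo[%classic) (wm (P th y))%:E < +oo)%E) ->
  IC lam wp wm tl tu x P ->
  [/\ mechanism tl tu x (Pstar lam mus ps wp wm x P),
      IC lam wp wm tl tu x (Pstar lam mus ps wp wm x P)
    & (profit tl tu f P <= profit tl tu f (Pstar lam mus ps wp wm x P))%E].
Proof.
(* Neither [wp], nor the attainment of [mus], nor the uniqueness of [ps], nor
   the prior beyond [f > 0] plays any role. *)
move=> lam_gt0 _ hwm mus_max _ ps01 mus_ps _ _ _ f_gt0 _ mech fin ic.
have tail th : tl <= th <= tu -> is_tail (P th) by case/mech.
have dist_lty th : tl <= th <= tu -> (distortion wm (P th) < +oo)%E := fin th.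
split.
- move=> th th_in; split; first by case: (mech th th_in).
  exact: (Pstar_is_tail wp x lam_gt0 hwm mus_max ps01 (tail th th_in) (dist_lty th th_in)).
- move=> th th' th_in th'_in.
  rewrite (CPT_Pstar wp x lam_gt0 hwm mus_max ps01 mus_ps (tail th th_in) (dist_lty th th_in)).
  rewrite (CPT_Pstar wp x lam_gt0 hwm mus_max ps01 mus_ps
             (tail th' th'_in) (dist_lty th' th'_in)).
  exact: ic.
- have f_ge0 th : tl <= th <= tu -> (0 <= (f th)%:E)%E.
    by move=> /f_gt0 /ltW; rewrite lee_fin.
  apply: ge0_le_integral_nomeas => th; rewrite /= in_itv /= => th_in.
    exact: mule_ge0 (integral_tail_ge0 (tail th th_in)) (f_ge0 th th_in).
  apply: lee_pmul (integral_tail_ge0 (tail th th_in)) (f_ge0 th th_in) _ (lexx _).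
  exact: (integral_Pstar_ge wp x lam_gt0 hwm mus_max ps01 (tail th th_in) (dist_lty th th_in)).
Qed.
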